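(* Let $\mathfrak m,\mathfrak m^*$ be complex-valued functions on the edges of the lattice strip and let $\phi=\int_{\gamma_0}\big(\mathfrak m(z)\psi(z)\,dz+\mathfrak m^*(z)\psi^*(z)\,d\bar z\big)$. Then its Hilbert space adjoint is $$\phi^\dagger=\int_{\gamma_0}\big(-\overline{\mathfrak m(z)}\,\psi(z)\,dz+\overline{\mathfrak m^*(z)}\,\psi^*(z)\,d\bar z\big).$$
   Context: Fix integers $a<0<b$, $C=\{a,\dots,b\}$, $C^*=\{a+\frac12,\dots,b-\frac12\}$. $\tilde V$ is the complex inner product space with orthonormal basis $(e_\rho)_{\rho\in\{\pm1\}^C}$, and $\dagger$ is the Hilbert space adjoint. For $x'\in C^*$, $\varsigma_{x'}(\rho)$ flips the signs of $\rho_x$ for $x<x'$; $\psi_{x'}e_\rho=\frac{-\rho_{x'-1/2}+i\rho_{x'+1/2}}{\sqrt2}e_{\varsigma_{x'}(\rho)}$, $\psi^*_{x'}e_\rho=\frac{-i\rho_{x'-1/2}+\rho_{x'+1/2}}{\sqrt2}e_{\varsigma_{x'}(\rho)}$. The lattice strip has vertices $C\times\mathbb Z\subset\mathbb C$ and nearest-neighbour edges identified with their midpoints; on the horizontal edges $x'\in C^*$ at height $0$ the fermions are $\psi(x')=\psi_{x'}$, $\psi^*(x')=\psi^*_{x'}$. The contour $\gamma_0=(a,a+1,\dots,b)$ crosses the strip at height $0$, and for a contour $(w_0,\dots,w_m)$ with $z_j$ the edge joining $w_{j-1},w_j$, $\int(\mathfrak m\psi\,dz+\mathfrak m^*\psi^*\,d\bar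 z)=\sum_j(\mathfrak m(z_j)\psi(z_j)(w_j-w_{j-1})+\mathfrak m^*(z_j)\psi^*(z_j)\overline{(w_j-w_{j-1})})$. *)

(* Complex scalars: any numClosedFieldType K (e.g. algC, or
   complex R for R : rcfType), with imaginary unit 'i, conjugation ^*, sqrtC. *)
From mathcomp Require Import all_boot all_order all_algebra.
Set Implicit Arguments. Unset Strict Implicit. Unset Printing Implicit Defensive.
Import Order.TTheory GRing.Theory Num.Theory.
Local Open Scope ring_scope.

(* C = {a,...,b} is indexed by 'I_(nsites a b); site i <-> integer a + i *)
Definition nsites (a b : int) : nat := `|b - a|%N.+1.
Definition pos (a b : int) (i : 'I_(nsites a b)) : int := a + (i : nat)%:Z.

(* spin configurations rho in {+1,-1}^C ; true = +1, false = -1 *)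
Notation config a b := {ffun 'I_(nsites a b) -> bool}.
(* the space V~ : functions config -> K, i.e. coordinates in the basis e_rho *)
Notation Vt K a b := {ffun config a b -> K}.

Definition spin (K : numClosedFieldType) (s : bool) : K := if s then 1 else -1.
Definition rho_at (K : numClosedFieldType) (a b : int) (rho : config a b) (x : int) : K :=
  \sum_(i : 'I_(nsites a b) | pos i == x) spin K (rho i).

Definition ebasis (K : numClosedFieldType) (a b : int) (rho : config a b) : Vt K a b :=
  [ffun s => (s == rho)%:R].
Definition vscale (K : numClosedFieldType) (a b : int) (c : K) (v : Vt K a b) : Vt K a b :=
  [ffun s => c * v s].
Definition inner (K : numClosedFieldType) (a b : int) (u v : Vt K a b) : K :=
  \sum_rho (u rho)^* * v rho.

Definition adjoint_of (K : numClosedFieldType) (a b : int) (A B : Vt K a b -> Vt K a b) : Prop :=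
  forall u v, inner u (A v) = inner (B u) v.

(* x' = k + 1/2 in C^* is encoded by the integer k.
   varsigma_{x'} flips rho_x for x < x', i.e. x <= k *)
Definition varsigma (a b : int) (k : int) (rho : config a b) : config a b :=
  [ffun i => if pos i <= k then ~~ rho i else rho i].

Definition psi (K : numClosedFieldType) (a b : int) (k : int) (v : Vt K a b) : Vt K a b :=
  \sum_rho vscale (v rho * ((- rho_at K rho k + 'i * rho_at K rho (k + 1)) / sqrtC 2))
                  (ebasis K (varsigma k rho)).
Definition psis (K : numClosedFieldType) (a b : int) (k : int) (v : Vt K a b) : Vt K a b :=
  \sum_rho vscale (v rho * ((- 'i * rho_at K rho k + rho_at K rho (k + 1)) / sqrtC 2))
                  (ebasis K (varsigma k rho)).

(* Edges of the lattice Z x Z (containing the strip C x Z):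
   hedge x y joins x+iy and (x+1)+iy (midpoint x+1/2+iy);
   vedge x y joins x+iy and x+i(y+1). *)
Inductive edge := hedge of int & int | vedge of int & int.

(* Discrete contour integral  \int (m psi dz + ms psi* dzbar)  along a contour
   (w_0,...,w_m) whose vertices lie at height 0 (w_j = x_j, integers, consecutive
   ones adjacent).  The edge z_j joining w_{j-1}, w_j is hedge (min) 0, where
   psi(z_j) = psi_{min+1/2}, psi*(z_j) = psi*_{min+1/2}; w_j - w_{j-1} is real. *)
Definition contour_int (K : numClosedFieldType) (a b : int) (m ms : edge -> K)
    (w : seq int) (v : Vt K a b) : Vt K a b :=
  \sum_(pq <- zip w (behead w))
    let k := Num.min pq.1 pq.2 in
    let d : K := (pq.2 - pq.1)%:~R in
    vscale (m (hedge k 0) * d) (psi k v) + vscale (ms (hedge k 0) * d^*) (psis k v).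

Definition gamma0 (a b : int) : seq int := [seq a + (i%:Z) | i <- iota 0 (`|b - a|%N.+1)].

From mathcomp Require Import all_boot all_order all_algebra.
From mathcomp Require Import zify ring.
Set Implicit Arguments. Unset Strict Implicit. Unset Printing Implicit Defensive.
Import Order.TTheory GRing.Theory Num.Theory.
Local Open Scope ring_scope.

(* Both psi_{x'} and psi*_{x'} have the form e_rho |-> c(rho) e_{varsigma rho}
   for the involution varsigma = varsigma_{x'}, and the adjoint of such an
   operator has coefficient rho |-> conj (c (varsigma rho)).  As varsigma negates
   rho_{x'-1/2}, fixes rho_{x'+1/2}, and conj i = -i, psi_{x'} is skew-adjoint and
   psi*_{x'} self-adjoint.  Since dz is real along a horizontal contour,
   conjugating the weights gives the formula for every contour at height 0. *)

Section Sesquilinear.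
Variables (K : numClosedFieldType) (a b : int).

Lemma inner0r (u : Vt K a b) : inner u 0 = 0.
Proof. by rewrite /inner big1 // => r _; rewrite ffunE mulr0. Qed.

Lemma inner0l (v : Vt K a b) : inner 0 v = 0.
Proof. by rewrite /inner big1 // => r _; rewrite ffunE rmorph0 mul0r. Qed.

Lemma inner_addr (u v1 v2 : Vt K a b) : inner u (v1 + v2) = inner u v1 + inner u v2.
Proof. by rewrite /inner -big_split; apply: eq_bigr => r _; rewrite ffunE mulrDr. Qed.

Lemma inner_addl (u1 u2 v : Vt K a b) : inner (u1 + u2) v = inner u1 v + inner u2 v.
Proof. by rewrite /inner -big_split; apply: eq_bigr => r _; rewrite ffunE rmorphD mulrDl. Qed.

Lemma adjoint_of_sum (I : Type) (s : seq I) (A B : I -> Vt K a b -> Vt K a b) :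
    (forall i, adjoint_of (A i) (B i)) ->
  adjoint_of (fun v => \sum_(i <- s) A i v) (fun u => \sum_(i <- s) B i u).
Proof.
move=> AB u v.
rewrite (big_morph (inner u) (inner_addr u) (inner0r u)).
rewrite (big_morph (fun x => inner x v) (fun x y => inner_addl x y v) (inner0l v)).
by apply: eq_bigr => i _; apply: AB.
Qed.

End Sesquilinear.

Section FlipOperators.
Variables (K : numClosedFieldType) (a b : int).
Implicit Types (k : int) (r s : config a b) (u v : Vt K a b) (c : config a b -> K).

Section Involution.
Variables (f : config a b -> config a b) (fK : involutive f).

Definition flip_op c v : Vt K a b := \sum_rho vscale (v rho * c rho) (ebasis K (f rho)).

Lemma flip_opE c v s : flip_op c v s = v (f s) * c (f s).
Proof.
rewrite sum_ffunE (bigD1 (f s)) //= big1 ?addr0; first by rewrite !ffunE fK eqxx mulr1.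
move=> r /negbTE neq_r; rewrite !ffunE.
by rewrite -[s in s == _]fK (inj_eq (inv_inj fK)) eq_sym neq_r mulr0.
Qed.

Lemma flip_op_adjoint c : adjoint_of (flip_op c) (flip_op (fun r => (c (f r))^*)).
Proof.
move=> u v; rewrite /inner (reindex_inj (inv_inj fK)) /=.
apply: eq_bigr => r _; rewrite !flip_opE fK rmorphM /= conjCK.
by rewrite mulrA mulrAC.
Qed.

End Involution.

Lemma varsigmaK k : involutive (@varsigma a b k).
Proof. by move=> r; apply/ffunP=> i; rewrite !ffunE; case: ifP => ->; rewrite ?negbK. Qed.

Definition psi_coef k r : K :=
  (- rho_at K r k + 'i * rho_at K r (k + 1)) / sqrtC 2.
Definition psis_coef k r : K :=
  (- 'i * rho_at K r k + rho_at K r (k + 1)) / sqrtC 2.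

Lemma psi_flip k v : psi k v = flip_op (varsigma k) (psi_coef k) v.
Proof. by []. Qed.

Lemma psis_flip k v : psis k v = flip_op (varsigma k) (psis_coef k) v.
Proof. by []. Qed.

Lemma conj_spin (t : bool) : (spin K t)^* = spin K t.
Proof. by case: t; rewrite /spin ?conjC1 ?conjCN1. Qed.

Lemma conj_rho_at r x : (rho_at K r x)^* = rho_at K r x.
Proof. by rewrite /rho_at rmorph_sum; apply: eq_bigr => i _; apply: conj_spin. Qed.

Lemma rho_at_varsigma k r : rho_at K (varsigma k r) k = - rho_at K r k.
Proof.
rewrite /rho_at -sumrN; apply: eq_bigr => i /eqP posi.
by rewrite ffunE posi lexx; case: (r i); rewrite /spin ?opprK.
Qed.

Lemma rho_at_varsigma_succ k r : rho_at K (varsigma k r) (k + 1) = rho_at K r (k + 1).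
Proof.
rewrite /rho_at; apply: eq_bigr => i /eqP posi.
by rewrite ffunE posi; case: ifP => //; lia.
Qed.

Lemma conj_sqrtC2 : (sqrtC (2 : K))^* = sqrtC 2.
Proof. by apply: geC0_conj; rewrite sqrtC_ge0 ler0n. Qed.

Lemma conj_psi_coef_varsigma k r : (psi_coef k (varsigma k r))^* = - psi_coef k r.
Proof.
rewrite /psi_coef rho_at_varsigma rho_at_varsigma_succ.
rewrite !(rmorphM, rmorphD, rmorphN, fmorphV) /= conjCi conj_sqrtC2 !conj_rho_at.
by ring.
Qed.

Lemma conj_psis_coef_varsigma k r : (psis_coef k (varsigma k r))^* = psis_coef k r.
Proof.
rewrite /psis_coef rho_at_varsigma rho_at_varsigma_succ.
rewrite !(rmorphM, rmorphD, rmorphN, fmorphV) /= conjCi conj_sqrtC2 !conj_rho_at.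
by ring.
Qed.

Definition edge_op k (p q : K) v : Vt K a b := vscale p (psi k v) + vscale q (psis k v).

Lemma edge_op_flip k p q v :
  edge_op k p q v = flip_op (varsigma k) (fun r => p * psi_coef k r + q * psis_coef k r) v.
Proof.
apply/ffunP => s; rewrite /edge_op psi_flip psis_flip !ffunE !(flip_opE (varsigmaK k)).
by ring.
Qed.

Lemma edge_op_adjoint k p q : adjoint_of (edge_op k p q) (edge_op k (- p^*) q^*).
Proof.
move=> u v; rewrite !edge_op_flip (flip_op_adjoint (varsigmaK k)); congr inner.
apply/ffunP => s; rewrite !(flip_opE (varsigmaK k)) rmorphD (rmorphM _ p) (rmorphM _ q) /=.
by rewrite conj_psi_coef_varsigma conj_psis_coef_varsigma mulrN mulNr.
Qed.

End FlipOperators.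

Lemma contour_int_adjoint (K : numClosedFieldType) (a b : int)
    (m ms : edge -> K) (w : seq int) :
  adjoint_of (@contour_int K a b m ms w)
             (@contour_int K a b (fun z => - (m z)^*) (fun z => (ms z)^*) w).
Proof.
apply: adjoint_of_sum => -[x y] /=; set k := Num.min x y; set d : K := (y - x)%:~R.
have real_d : d^* = d by rewrite rmorph_int.
have -> : - (m (hedge k 0))^* * d = - (m (hedge k 0) * d)^*.
  by rewrite rmorphM /= real_d mulNr.
have -> : (ms (hedge k 0))^* * d^* = (ms (hedge k 0) * d^*)^* by rewrite rmorphM /= !real_d.
exact: edge_op_adjoint.
Qed.

Theorem proposition3p11 (K : numClosedFieldType) (a b : int)
    (ha : a < 0) (hb : 0 < b) (m ms : edge -> K) :
  adjoint_of
    (@contour_int K a b m ms (gamma0 a b))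
    (@contour_int K a b (fun z => - (m z)^*) (fun z => (ms z)^*) (gamma0 a b)).
Proof. exact: contour_int_adjoint. Qed.
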